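(* Let $(\mathcal J_1,\mathcal J_2,\mathcal J_3)$ be a generalized almost hypercomplex structure on a Courant algebroid $E$. Then, identifying $\Lambda^3E^*/\mathrm{im}\,\partial_{\mathbb H}$ with $\mathrm{im}\,P$, where $P=\frac23\sum_{i=1}^3\Pi_{\mathcal J_i}$, the intrinsic torsion of $(\mathcal J_1,\mathcal J_2,\mathcal J_3)$ is $\frac16\sum_{i=1}^3N_{\mathcal J_i}$.
   Context: A Courant algebroid on $M$ is a real vector bundle $E\to M$ with nondegenerate symmetric bilinear form $\langle\cdot,\cdot\rangle$, an $\mathbb R$-bilinear bracket $[\cdot,\cdot]$ on $\Gamma(E)$ and bundle map $\pi:E\to TM$ such that for $u,v,w\in\Gamma(E)$, $f\in C^\infty(M)$: $[u,[v,w]]=[[u,v],w]+[v,[u,w]]$; $\pi([u,v])=[\pi(u),\pi(v)]$; $[u,fv]=\pi(u)(f)v+f[u,v]$; $\pi(u)\langle v,w\rangle=\langle[u,v],w\rangle+\langle v,[u,w]\rangle$; $2\langle[u,u],v\rangle=\pi(v)\langle u,u\rangle$. A generalized connection is an $\mathbb R$-linear $D:\Gamma(E)\to\Gamma(E^*\otimes E)$ with $D_u(fv)=\pi(u)(f)v+fD_uv$ and $\pi(u)\langle v,w\rangle=\langle D_uv,w\rangle+\langle v,D_uw\rangle$; its torsion $T^D(u,v)=D_uv-D_vu-[u,v]+(Du)^*v$ ($(Du)^*$ adjoint of $w\mapsto D_wu$) is viewed as the 3-form $\langle T^D(u,v),w\rangle$. A generalized almost complex structure is a $\langle\cdot,\cdot\rangle$-orthogonal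 $\mathcal J$ with $\mathcal J^2=-\mathrm{Id}$, with Nijenhuis tensor $N_{\mathcal J}(u,v)=[\mathcal Ju,\mathcal Jv]-[u,v]-\mathcal J([\mathcal Ju,v]+[u,\mathcal Jv])$, viewed as the 3-form $\langle N_{\mathcal J}(u,v),w\rangle$. A generalized almost hypercomplex structure is a triple of pairwise anticommuting generalized almost complex structures with $\mathcal J_3=\mathcal J_1\mathcal J_2$. $\Lambda^{1,1}_{\mathbb H}E^*$ is the bundle of 2-forms $\beta$ with $\beta(\mathcal J_iu,\mathcal J_iv)=\beta(u,v)$ for $i=1,2,3$; $\partial_{\mathbb H}:E^*\otimes\Lambda^{1,1}_{\mathbb H}E^*\to\Lambda^3E^*$, $(\partial_{\mathbb H}\eta)(u,v,w)=\eta(u,v,w)+\eta(w,u,v)+\eta(v,w,u)$. For a generalized almost complex structure $\mathcal J$, $(\Pi_{\mathcal J}\alpha)(u,v,w)=\frac14(\alpha(u,v,w)-\alpha(u,\mathcal Jv,\mathcal Jw)-\alpha(\mathcal Ju,v,\mathcal Jw)-\alpha(\mathcal Ju,\mathcal Jv,w))$ on $\Lambda^3E^*$. The map $P$ is a projector on $\Lambda^3E^*$ with $\ker P=\mathrm{im}\,\partial_{\mathbb H}$, which gives the identification. The intrinsic torsion is the class in $\Lambda^3E^*/\mathrm{im}\,\partial_{\mathbb H}$ of $T^D$ for any generalized connection $D$ with $D\mathcal J_i=0$, $i=1,2,3$; under the identification it is $P(T^D)$. *)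

From HB Require Import structures.
From mathcomp Require Import all_boot all_order all_algebra.
Set Implicit Arguments. Unset Strict Implicit. Unset Printing Implicit Defensive.
Import Order.TTheory GRing.Theory Num.Theory.
Local Open Scope ring_scope.

(* Algebraic model of a Courant algebroid E -> M:
   R   : the real scalars,
   Fn  : the algebra C^oo(M) (commutative R-algebra),
   S   : the Fn-module Gamma(E) of sections,
   vector fields = R-linear derivations of Fn (anchor value pi u : Fn -> Fn). *)

Section Courant.
Variables (R : realFieldType) (Fn : comAlgType R) (S : lmodType Fn).

Definition rsc (c : R) (u : S) : S := (c%:A : Fn) *: u.

Record courant_algebroid (pair : S -> S -> Fn) (br : S -> S -> S)
    (an : S -> Fn -> Fn) : Prop := CourantAlgebroid {
  pair_sym : forall u v, pair u v = pair v u;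
  pair_add : forall u v w, pair (u + v) w = pair u w + pair v w;
  pair_scale : forall (f : Fn) u v, pair (f *: u) v = f * pair u v;
  pair_nondeg : forall u, (forall v, pair u v = 0) -> u = 0;
  an_add : forall u v f, an (u + v) f = an u f + an v f;
  an_scale : forall (g : Fn) u f, an (g *: u) f = g * an u f;
  an_fadd : forall u f g, an u (f + g) = an u f + an u g;
  an_fscale : forall u (c : R) f, an u (c *: f) = c *: an u f;
  an_fmul : forall u f g, an u (f * g) = an u f * g + f * an u g;
  br_addl : forall u v w, br (u + v) w = br u w + br v w;
  br_addr : forall u v w, br u (v + w) = br u v + br u w;
  br_scalel : forall (c : R) u v, br (rsc c u) v = rsc c (br u v);
  br_scaler : forall (c : R) u v, br u (rsc c v) = rsc c (br u v);
  courant_jacobi : forall u v w, br u (br v w) = br (br u v) w + br v (br u w);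
  courant_anchor : forall u v f,
    an (br u v) f = an u (an v f) - an v (an u f);
  courant_leibniz : forall u v (f : Fn), br u (f *: v) = an u f *: v + f *: br u v;
  courant_inv : forall u v w, an u (pair v w) = pair (br u v) w + pair v (br u w);
  courant_sym : forall u v, 2%:R * pair (br u u) v = an v (pair u u)
}.

Record gen_connection (pair : S -> S -> Fn) (an : S -> Fn -> Fn)
    (D : S -> S -> S) : Prop := GenConnection {
  gc_addl : forall u v w, D (u + v) w = D u w + D v w;
  gc_scalel : forall (f : Fn) u v, D (f *: u) v = f *: D u v;
  gc_addr : forall u v w, D u (v + w) = D u v + D u w;
  gc_leibniz : forall u (f : Fn) v, D u (f *: v) = an u f *: v + f *: D u v;
  gc_metric : forall u v w, an u (pair v w) = pair (D u v) w + pair v (D u w)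
}.

Record gen_almost_complex (pair : S -> S -> Fn) (J : S -> S) : Prop :=
  GenAlmostComplex {
  gac_add : forall u v, J (u + v) = J u + J v;
  gac_scale : forall (f : Fn) u, J (f *: u) = f *: J u;
  gac_orth : forall u v, pair (J u) (J v) = pair u v;
  gac_sq : forall u, J (J u) = - u
}.

Record gen_almost_hypercomplex (pair : S -> S -> Fn) (J1 J2 J3 : S -> S) : Prop :=
  GenAlmostHypercomplex {
  gah_J1 : gen_almost_complex pair J1;
  gah_J2 : gen_almost_complex pair J2;
  gah_J3 : gen_almost_complex pair J3;
  gah_anti12 : forall u, J1 (J2 u) = - J2 (J1 u);
  gah_anti13 : forall u, J1 (J3 u) = - J3 (J1 u);
  gah_anti23 : forall u, J2 (J3 u) = - J3 (J2 u);
  gah_J3def : forall u, J3 u = J1 (J2 u)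
}.

(* D J = 0, i.e. (D_u J) v = D_u (J v) - J (D_u v) = 0 *)
Definition parallel (D : S -> S -> S) (J : S -> S) : Prop :=
  forall u v, D u (J v) = J (D u v).

Definition form3 := S -> S -> S -> Fn.

Definition nijenhuis3 (pair : S -> S -> Fn) (br : S -> S -> S) (J : S -> S) : form3 :=
  fun u v w => pair (br (J u) (J v) - br u v - J (br (J u) v + br u (J v))) w.

(* Torsion as a 3-form: <T^D(u,v), w>, with <(Du)^* v, w> = <D_w u, v> *)
Definition torsion3 (pair : S -> S -> Fn) (br : S -> S -> S) (D : S -> S -> S) : form3 :=
  fun u v w => pair (D u v - D v u - br u v) w + pair (D w u) v.

Definition PiJ (J : S -> S) (a : form3) : form3 :=
  fun u v w => ((4%:R : R)^-1) *:
    (a u v w - a u (J v) (J w) - a (J u) v (J w) - a (J u) (J v) w).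

Definition Pproj (J1 J2 J3 : S -> S) (a : form3) : form3 :=
  fun u v w => ((2%:R / 3%:R : R)) *: (PiJ J1 a u v w + PiJ J2 a u v w + PiJ J3 a u v w).

End Courant.

From mathcomp Require Import all_boot all_order all_algebra.
From mathcomp Require Import ring.
Import GRing.Theory Num.Theory.
Local Open Scope ring_scope.

(* If D J = 0, every D-term of the torsion cancels in the combination
   T(u,v,w) - T(u,Jv,Jw) - T(Ju,v,Jw) - T(Ju,Jv,w) = 4 Pi_J(T^D), because J is
   skew-adjoint and commutes with D; only the bracket terms survive, and they
   assemble into <N_J(u,v),w>.  Hence Pi_J(T^D) = N_J/4 for each J_i, and
   P(T^D) = (2/3)(1/4) sum_i N_{J_i}. *)

Section ParallelTorsion.
Variables (R : realFieldType) (Fn : comAlgType R) (S : lmodType Fn).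
Variables (pair : S -> S -> Fn) (br : S -> S -> S).
Hypotheses (pairC : forall u v, pair u v = pair v u)
  (pairDl : forall u v w, pair (u + v) w = pair u w + pair v w)
  (pairZl : forall (f : Fn) u v, pair (f *: u) v = f * pair u v).
Variables (J : S -> S) (D : S -> S -> S).
Hypotheses (HJ : gen_almost_complex pair J) (DJ : parallel D J).

Lemma pairDr u v w : pair w (u + v) = pair w u + pair w v.
Proof. by rewrite pairC pairDl !(pairC w). Qed.

Lemma pairNl u v : pair (- u) v = - pair u v.
Proof. by rewrite -scaleN1r pairZl mulN1r. Qed.

Lemma pairNr u v : pair v (- u) = - pair v u.
Proof. by rewrite pairC pairNl pairC. Qed.

Lemma gac_opp u : J (- u) = - J u.
Proof. by rewrite -scaleN1r (gac_scale HJ) scaleN1r. Qed.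

Lemma pair_skewJ u v : pair (J u) v = - pair u (J v).
Proof. by rewrite -(gac_orth HJ) (gac_sq HJ) pairNl. Qed.

Lemma nijenhuis3_parallel_torsion u v w :
  nijenhuis3 pair br J u v w =
  torsion3 pair br D u v w - torsion3 pair br D u (J v) (J w)
  - torsion3 pair br D (J u) v (J w) - torsion3 pair br D (J u) (J v) w.
Proof.
rewrite /nijenhuis3 /torsion3 !DJ.
rewrite !(gac_add HJ, gac_opp, pairDl, pairDr, pairNl, pairNr) !pair_skewJ.
rewrite !(gac_sq HJ, gac_add HJ, gac_opp, pairDl, pairDr, pairNl, pairNr) !opprK.
ring.
Qed.

Lemma PiJ_parallel_torsion u v w :
  PiJ J (torsion3 pair br D) u v w = (4%:R : R)^-1 *: nijenhuis3 pair br J u v w.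
Proof. by rewrite nijenhuis3_parallel_torsion. Qed.

End ParallelTorsion.

Theorem corollary4p2 (R : realFieldType) (Fn : comAlgType R) (S : lmodType Fn)
    (pair : S -> S -> Fn) (br : S -> S -> S) (an : S -> Fn -> Fn)
    (J1 J2 J3 : S -> S) (D : S -> S -> S) :
  courant_algebroid pair br an ->
  gen_almost_hypercomplex pair J1 J2 J3 ->
  gen_connection pair an D ->
  parallel D J1 -> parallel D J2 -> parallel D J3 ->
  forall u v w : S,
    Pproj J1 J2 J3 (torsion3 pair br D) u v w =
    ((6%:R : R)^-1) *: (nijenhuis3 pair br J1 u v w + nijenhuis3 pair br J2 u v w
                        + nijenhuis3 pair br J3 u v w).
Proof.
move=> HC HH _ DJ1 DJ2 DJ3 u v w.
have PiJ_torsion := @PiJ_parallel_torsion _ _ _ pair br (pair_sym HC) (pair_add HC) (pair_scale HC).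
rewrite /Pproj (PiJ_torsion _ _ (gah_J1 HH) DJ1) (PiJ_torsion _ _ (gah_J2 HH) DJ2)
  (PiJ_torsion _ _ (gah_J3 HH) DJ3) -!scalerDr scalerA.
congr (_ *: _).
have n3 : (3%:R : R) != 0 by rewrite pnatr_eq0.
have n4 : (4%:R : R) != 0 by rewrite pnatr_eq0.
have -> : (6%:R : R) = 3%:R * 2%:R by rewrite -natrM.
by field.
Qed.
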